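(* Consider a finite reward-free MDP with occupancy polytope $\Phi$, let $d_e\in\Phi$, and let $F_e$ be the minimal face of $\Phi$ containing $d_e$. For any $r\in\mathcal R(d_e)$, the optimal occupancy set $\Phi^\star(r):=\arg\max_{d\in\Phi}r^\top d$ is an exposed face of $\Phi$ containing $d_e$. Moreover, if $r\in\mathrm{relint}(\mathcal R(d_e))$, then $\Phi^\star(r)=F_e$.
   Context: The MDP has finite $S$, $A$, transitions $P$, initial distribution $\mu_0$, discount $\gamma\in(0,1)$; $(Md)(s)=\sum_a d(s,a)-\gamma\sum_{s',a'}P(s\mid s',a')d(s',a')$ and $\Phi=\{d\ge0:Md=(1-\gamma)\mu_0\}$ (a polytope). Rewards are $r\in\Delta(S\times A)$ (probability simplex). $\mathrm{subopt}(r,d):=\max_{\tilde d\in\Phi}r^\top\tilde d-r^\top d$ and $\mathcal R(d_e):=\{r\in\Delta(S\times A):\mathrm{subopt}(r,d_e)=0\}$. $\mathrm{relint}$ denotes relative interior. *)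

From HB Require Import structures.
From mathcomp Require Import all_boot all_order all_algebra.
From mathcomp Require Import boolp classical_sets reals.
Set Implicit Arguments. Unset Strict Implicit. Unset Printing Implicit Defensive.
Import Order.TTheory GRing.Theory Num.Theory.
Local Open Scope ring_scope.
Local Open Scope classical_set_scope.

Section MDP.
Variables (R : realType) (S A : finType).

Definition vec := (S * A)%type -> R.

Definition dotp (u v : vec) : R := \sum_(x : S * A) u x * v x.

(* (M d)(s) = sum_a d(s,a) - gamma sum_{s',a'} P(s | s',a') d(s',a');
   P s s' a' stands for P(s | s', a'). *)
Definition flowM (P : S -> S -> A -> R) (gamma : R) (d : vec) (s : S) : R :=
  \sum_(a : A) d (s, a) - gamma * \sum_(x : S * A) P s x.1 x.2 * d x.

Definition occupancy (P : S -> S -> A -> R) (mu0 : S -> R) (gamma : R) : set vec :=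
  [set d | (forall x, 0 <= d x) /\
           (forall s, flowM P gamma d s = (1 - gamma) * mu0 s)].

Definition simplex : set vec :=
  [set r | (forall x, 0 <= r x) /\ \sum_(x : S * A) r x = 1].

Definition subopt (Phi : set vec) (r d : vec) : R :=
  sup [set dotp r d' | d' in Phi] - dotp r d.

Definition rewardSet (Phi : set vec) (de : vec) : set vec :=
  [set r | simplex r /\ subopt Phi r de = 0].

Definition optSet (Phi : set vec) (r : vec) : set vec :=
  [set d | Phi d /\ forall d', Phi d' -> dotp r d' <= dotp r d].

Definition cvx (t : R) (x y : vec) : vec := fun i => t * x i + (1 - t) * y i.

Definition is_convex (C : set vec) : Prop :=
  forall x y t, C x -> C y -> 0 <= t <= 1 -> C (cvx t x y).

Definition is_face (C F : set vec) : Prop :=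
  F `<=` C /\ is_convex F /\
  forall x y t, C x -> C y -> 0 < t < 1 -> F (cvx t x y) -> F x /\ F y.

Definition is_exposed_face (C F : set vec) : Prop :=
  is_face C F /\
  exists (c : vec) (b : R),
    (forall x, C x -> dotp c x <= b) /\
    (forall x, F x <-> (C x /\ dotp c x = b)).

Definition is_min_face (C F : set vec) (x : vec) : Prop :=
  is_face C F /\ F x /\ forall G, is_face C G -> G x -> F `<=` G.

Definition aff (C : set vec) : set vec :=
  [set y | exists (n : nat) (p : 'I_n -> vec) (w : 'I_n -> R),
     (forall k, C (p k)) /\ \sum_(k < n) w k = 1 /\
     forall i, y i = \sum_(k < n) w k * p k i].

(* relative interior (w.r.t. the sup norm; all norms are equivalent) *)
Definition relint (C : set vec) : set vec :=
  [set x | C x /\ exists eps : R, 0 < eps /\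
     forall y, aff C y -> (forall i, `|y i - x i| < eps) -> C y].

End MDP.

From mathcomp Require Import all_boot all_order all_algebra.
From mathcomp Require Import boolp classical_sets reals.
From mathcomp Require Import ring lra.
Set Implicit Arguments.
Unset Strict Implicit.
Unset Printing Implicit Defensive.

Import Order.TTheory GRing.Theory Num.Theory.
Local Open Scope ring_scope.
Local Open Scope classical_set_scope.

(* Since Phi lies in the probability simplex, r^T d is bounded on Phi, so
   r \in R(d_e) says exactly that d_e maximises r over Phi, and the argmax of a
   linear functional over a convex set is an exposed face.  For r in the
   relative interior, write r as a proper convex combination of some
   r2 \in R(d_e) and of the reward u uniform on the support of d_e.  As d_e is
   optimal for both, every maximiser of r also maximises u, hence is supported
   in supp d_e.  Such a point d lies in every face containing d_e: as d vanishes
   off supp d_e, the segment from d through d_e extends beyond d_e inside Phi.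
   So Phi*(r) is included in F_e, and the converse is the minimality of F_e. *)

Section Convexity.
Variables (R : realType) (S A : finType).
Implicit Types (C : set (vec R S A)) (c d m r x y : vec R S A) (s t : R).

Lemma sumr_cvx (I : finType) (f g : I -> R) t :
  \sum_i (t * f i + (1 - t) * g i) = t * \sum_i f i + (1 - t) * \sum_i g i.
Proof. by rewrite big_split -!mulr_sumr. Qed.

Lemma dotpC x y : dotp x y = dotp y x.
Proof. by apply: eq_bigr => i _; rewrite mulrC. Qed.

Lemma dotp_cvxr r x y t : dotp r (cvx t x y) = t * dotp r x + (1 - t) * dotp r y.
Proof. by rewrite /dotp -sumr_cvx; apply: eq_bigr => i _; rewrite /cvx; ring. Qed.

Lemma dotp_cvxl x y d t : dotp (cvx t x y) d = t * dotp x d + (1 - t) * dotp y d.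
Proof. by rewrite dotpC dotp_cvxr !(dotpC d). Qed.

Lemma cvxK x y t : 0 < t -> cvx t^-1 (cvx t x y) y = x.
Proof. by move=> t0; apply: funext => i; rewrite /cvx; field; rewrite gt_eqF. Qed.

Lemma aff_cvx C x y t : C x -> C y -> aff C (cvx t x y).
Proof.
move=> Cx Cy; exists 2%N, (fun k : 'I_2 => if val k == 0%N then x else y),
  (fun k : 'I_2 => if val k == 0%N then t else 1 - t).
split; first by move=> k; case: ifP.
split; first by rewrite !big_ord_recl big_ord0 /=; ring.
by move=> i; rewrite !big_ord_recl big_ord0 /= /cvx; ring.
Qed.

Lemma optSetE C c m :
  optSet C c m -> optSet C c = [set x | C x /\ dotp c x = dotp c m].
Proof.
move=> [Cm mmax]; apply/seteqP; split=> x [Cx xmax]; split=> //.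
  by apply/eqP; rewrite eq_le mmax // xmax.
by move=> y Cy; rewrite xmax mmax.
Qed.

Lemma optSet_exposed_face C c m :
  is_convex C -> optSet C c m -> is_exposed_face C (optSet C c).
Proof.
move=> convC Hm; have [_ mmax] := Hm; rewrite (optSetE Hm).
split; last by exists c, (dotp c m).
split; first by move=> x [].
split=> [x y t [Cx cx] [Cy cy] t01|x y t Cx Cy /andP[t0 t1] [_ cxy]].
  by split; [exact: convC | rewrite dotp_cvxr cx cy; ring].
have := mmax x Cx; have := mmax y Cy; rewrite dotp_cvxr in cxy.
by split; split=> //; nra.
Qed.

Lemma optSet_cvx_subr C r1 r2 m s : optSet C r1 m -> optSet C r2 m ->
  0 < s < 1 -> optSet C (cvx s r1 r2) `<=` optSet C r2.
Proof.
move=> [Cm max1] [_ max2] /andP[s0 s1] d [Cd dmax]; split=> // d' Cd'.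
have := dmax m Cm; have := max1 d Cd; have := max2 d Cd; have := max2 d' Cd'.
rewrite !dotp_cvxl; nra.
Qed.

Lemma relint_extend C r r' : relint C r -> C r' ->
  exists r2 s, C r2 /\ 0 < s < 1 /\ r = cvx s r2 r'.
Proof.
move=> [Cr [eps [eps0 ball]]] Cr'.
pose M := \big[Order.max/0]_i `|r i - r' i|.
have M0 : 0 <= M := bigmax_ge_id _ _ _ _.
pose t := eps / (M + 1).
have t0 : 0 < t by rewrite divr_gt0 // ltr_wpDl.
have tM : t * (M + 1) = eps by rewrite /t divfK // gt_eqF // ltr_wpDl.
exists (cvx (1 + t) r r'), (1 + t)^-1; split; last split.
- apply: ball; first exact: aff_cvx.
  move=> i; have -> : cvx (1 + t) r r' i - r i = t * (r i - r' i) by rewrite /cvx; ring.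
  rewrite normrM gtr0_norm // -tM.
  have riM : `|r i - r' i| <= M by exact: le_bigmax.
  by rewrite ltr_pM2l //; apply: le_lt_trans riM _; rewrite ltrDl.
- by rewrite invr_gt0 invf_lt1 ?ltrDl //; lra.
- by rewrite cvxK //; lra.
Qed.

End Convexity.

Section Simplex.
Variables (R : realType) (S A : finType).
Implicit Types (C : set (vec R S A)) (d m r x : vec R S A).

Lemma simplex_le1 x i : simplex x -> x i <= 1.
Proof. by move=> [x0 <-]; rewrite (bigD1 i) //= lerDl sumr_ge0. Qed.

Lemma dotp_simplex_le1 r d : simplex r -> simplex d -> dotp r d <= 1.
Proof.
move=> Hr Hd; rewrite -Hr.2; apply: ler_sum => i _.
by rewrite ler_piMr ?Hr.1 ?simplex_le1.
Qed.

Lemma rewardSetP C m r : C `<=` @simplex R S A -> C m ->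
  rewardSet C m r <-> simplex r /\ optSet C r m.
Proof.
move=> Csimplex Cm; rewrite /rewardSet /subopt.
have ubE : simplex r -> has_ubound [set dotp r d | d in C].
  by move=> Hr; exists 1 => _ [d Cd <-]; exact: dotp_simplex_le1 (Csimplex _ Cd).
split=> [[Hr /subr0_eq supE]|[Hr [_ mmax]]]; split=> //.
  by split=> // d Cd; rewrite -supE; apply: ub_le_sup (ubE Hr) _ _; exists d.
apply/eqP; rewrite subr_eq0 eq_le; apply/andP; split.
  by apply: ge_sup; [exists (dotp r m), m | move=> _ [d Cd <-]; exact: mmax].
by apply: ub_le_sup (ubE Hr) _ _; exists m.
Qed.

Definition supp_uniform m : vec R S A :=
  fun i => (m i != 0)%:R / \sum_j (m j != 0)%:R.

Lemma supp_size_gt0 m : simplex m -> 0 < \sum_j (m j != 0)%:R :> R.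
Proof.
move=> [_ m1]; have [i mi] : exists i, m i != 0.
  apply/existsP; apply: contraT; rewrite negb_exists => /forallP m0.
  by move: m1; rewrite big1 => [/eqP|j _]; [rewrite eq_sym oner_eq0 | apply/eqP/negPn].
by rewrite (bigD1 i) //= mi ltr_wpDr ?sumr_ge0.
Qed.

Lemma supp_uniform_simplex m : simplex m -> simplex (supp_uniform m).
Proof.
move=> Hm; have k0 := supp_size_gt0 Hm; split=> [i|].
  by rewrite /supp_uniform divr_ge0 // ltW.
by rewrite /supp_uniform -mulr_suml divff ?gt_eqF.
Qed.

Lemma dotp_supp_uniform m d : simplex d ->
  dotp (supp_uniform m) d = (1 - \sum_(i | m i == 0) d i) / \sum_j (m j != 0)%:R.
Proof.
move=> [_ d1].
have -> : 1 - \sum_(i | m i == 0) d i = \sum_(i | m i != 0) d i.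
  by rewrite -d1 (bigID (fun i => m i == 0)) /= addrC addrK.
rewrite /dotp mulr_suml [RHS]big_mkcond; apply: eq_bigr => i _.
by rewrite /supp_uniform; case: (m i != 0); rewrite /= ?mul0r // mul1r mulrC.
Qed.

Lemma optSet_supp_uniform C m : C `<=` @simplex R S A -> C m ->
  optSet C (supp_uniform m) = [set d | C d /\ forall i, m i = 0 -> d i = 0].
Proof.
move=> Csimplex Cm; have k0 := supp_size_gt0 (Csimplex _ Cm).
pose off d := \sum_(i | m i == 0) d i.
have off_ge0 d : C d -> 0 <= off d by case/Csimplex => d0 _; exact: sumr_ge0.
have valE d : C d -> dotp (supp_uniform m) d = (1 - off d) / \sum_j (m j != 0)%:R.
  by move/Csimplex/dotp_supp_uniform.
have offm : off m = 0 by apply: big1 => i /eqP.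
apply/seteqP; split=> d [Cd dP]; split=> //.
  have [d0 _] := Csimplex _ Cd.
  have off_d : off d = 0.
    apply/le_anti; rewrite off_ge0 // andbT.
    by have := dP m Cm; rewrite !valE // offm ler_pM2r ?invr_gt0 //; lra.
  by move=> i /eqP; exact: (psumr_eq0P (fun j _ => d0 j) off_d).
move=> d' Cd'; rewrite !valE // ler_pM2r ?invr_gt0 //.
have -> : off d = 0 by apply: big1 => i /eqP /dP.
by rewrite subr0 lerBlDr lerDl off_ge0.
Qed.

End Simplex.

Section Occupancy.
Variables (R : realType) (S A : finType).
Variables (P : S -> S -> A -> R) (mu0 : S -> R) (gamma : R).
Implicit Types (F : set (vec R S A)) (d m x y : vec R S A) (t : R).
Local Notation Phi := (occupancy P mu0 gamma).

Lemma flowM_cvx x y t s :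
  flowM P gamma (cvx t x y) s = t * flowM P gamma x s + (1 - t) * flowM P gamma y s.
Proof.
have := dotp_cvxr (fun i => P s i.1 i.2) x y t; rewrite /flowM /dotp => ->.
by rewrite /cvx sumr_cvx; ring.
Qed.

Lemma occupancy_cvx x y t :
  Phi x -> Phi y -> (forall i, 0 <= cvx t x y i) -> Phi (cvx t x y).
Proof. by move=> [_ Mx] [_ My] cvx0; split=> // s; rewrite flowM_cvx Mx My; ring. Qed.

Lemma occupancy_convex : is_convex Phi.
Proof.
move=> x y t Phix Phiy /andP[t0 t1]; apply: occupancy_cvx => // i.
by rewrite /cvx addr_ge0 // mulr_ge0 ?subr_ge0 //; [case: Phix | case: Phiy].
Qed.

Hypothesis P_stochastic : forall s' a, \sum_(s : S) P s s' a = 1.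

Lemma sum_flowM d : \sum_s flowM P gamma d s = (1 - gamma) * \sum_i d i.
Proof.
rewrite /flowM sumrB -mulr_sumr pair_bigA [X in _ - gamma * X]exchange_big /=.
under [X in _ - gamma * X]eq_bigr do rewrite -mulr_suml P_stochastic mul1r.
by rewrite mulrBl mul1r; congr (_ - _); apply: eq_bigr => -[].
Qed.

Hypotheses (mu0_sum1 : \sum_s mu0 s = 1) (gamma_lt1 : gamma < 1).

Lemma occupancy_sub_simplex : Phi `<=` @simplex R S A.
Proof.
move=> d [d0 Md]; split=> //.
have : (1 - gamma) * \sum_i d i = (1 - gamma) * 1.
  by rewrite -sum_flowM (eq_bigr _ (fun s _ => Md s)) -mulr_sumr mu0_sum1.
by move/(mulfI _); apply; rewrite subr_eq0 gt_eqF.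
Qed.

Lemma face_supp_sub F m d : is_face Phi F -> F m -> Phi d ->
  (forall i, m i = 0 -> d i = 0) -> F d.
Proof.
move=> [FPhi [_ Fext]] Fm Phid supp; have [m0 _] := FPhi _ Fm.
pose eps := \big[Order.min/1]_(i | m i != 0) m i.
have eps0 : 0 < eps by apply/bigmin_gtP; split=> // i mi; rewrite lt0r mi m0.
have Phiy : Phi (cvx (1 + eps) m d).
  apply: occupancy_cvx => // [|i]; first exact: FPhi.
  have [mi0|mi] := eqVneq (m i) 0; first by rewrite /cvx mi0 supp // !mulr0 addr0.
  have eps_le : eps <= m i by exact: bigmin_le_cond.
  have := simplex_le1 i (occupancy_sub_simplex Phid); have := Phid.1 i.
  rewrite /cvx; nra.
have t01 : 0 < (1 + eps)^-1 < 1 by rewrite invr_gt0 invf_lt1; lra.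
have := Fext _ _ _ Phiy Phid t01; rewrite cvxK; first by case.
lra.
Qed.

End Occupancy.

Theorem mainTheorem7 (R : realType) (S A : finType)
  (P : S -> S -> A -> R) (mu0 : S -> R) (gamma : R)
  (HP0 : forall s s' a, 0 <= P s s' a)
  (HP1 : forall s' a, \sum_(s : S) P s s' a = 1)
  (Hmu0 : forall s, 0 <= mu0 s)
  (Hmu1 : \sum_(s : S) mu0 s = 1)
  (Hgamma : 0 < gamma < 1)
  (de : vec R S A) (Hde : occupancy P mu0 gamma de)
  (Fe : set (vec R S A)) (HFe : is_min_face (occupancy P mu0 gamma) Fe de) :
  (forall r, rewardSet (occupancy P mu0 gamma) de r ->
     is_exposed_face (occupancy P mu0 gamma) (optSet (occupancy P mu0 gamma) r)
     /\ optSet (occupancy P mu0 gamma) r de) /\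
  (forall r, relint (rewardSet (occupancy P mu0 gamma) de) r ->
     optSet (occupancy P mu0 gamma) r = Fe).
Proof.
set Phi := occupancy P mu0 gamma.
have gamma_lt1 : gamma < 1 by case/andP: Hgamma.
have PhiS : Phi `<=` @simplex R S A := occupancy_sub_simplex HP1 Hmu1 gamma_lt1.
have reward_face r : rewardSet Phi de r ->
    is_exposed_face Phi (optSet Phi r) /\ optSet Phi r de.
  move=> /(rewardSetP _ PhiS Hde) [_ Hopt].
  by split=> //; apply: optSet_exposed_face Hopt; exact: occupancy_convex.
split=> // r Hr.
have u_opt : optSet Phi (supp_uniform de) de by rewrite optSet_supp_uniform.
have u_reward : rewardSet Phi de (supp_uniform de).
  by apply/(rewardSetP _ PhiS Hde); split=> //; exact/supp_uniform_simplex/PhiS.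
have [r2 [s [/(rewardSetP _ PhiS Hde) [_ r2_opt] [s01 r_cvx]]]] :=
  relint_extend Hr u_reward.
have [[optSet_face _] opt_de] := reward_face _ Hr.1.
apply/seteqP; split=> [d|]; last exact: HFe.2.2 _ optSet_face opt_de.
rewrite r_cvx => /(optSet_cvx_subr r2_opt u_opt s01).
rewrite optSet_supp_uniform // => -[Phid supp].
exact: (face_supp_sub HP1 Hmu1 gamma_lt1 HFe.1 HFe.2.1 Phid supp).
Qed.
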